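(* Fix $\beta>2$ and let $F_\beta(\mathbf{x},r)$, $r_1^\beta<r_2^\beta$, $\boldsymbol{\sigma}_0^\beta(r)$, $\boldsymbol{\sigma}_1^\beta(r)$, $\mathbf{p}^\beta(r)$ be as in the context. Let $h_0^\beta(r)=F_\beta(\boldsymbol{\sigma}_0^\beta(r),r)$ and $h_1^\beta(r)=F_\beta(\boldsymbol{\sigma}_1^\beta(r),r)$ if $r\in(0,r_1^\beta)$, $h_1^\beta(r)=F_\beta(\mathbf{p}^\beta(r),r)$ if $r\in(r_1^\beta,r_2^\beta)$. Then $h_0^\beta(r)<h_1^\beta(r)$ for all $r\in(0,r_1^\beta)\cup(r_1^\beta,r_2^\beta)$.
   Context: $\Xi=\{(x_1,x_2): x_1,x_2\ge0,\ x_1+x_2\le1\}$, $x_0=1-x_1-x_2$, $\mathbf{v}_k=(\cos(2\pi k/3),\sin(2\pi k/3))$, $F_\beta(\mathbf{x},r)=-\frac12|\sum_{k=0}^2x_k\mathbf{v}_k|^2+\frac1\beta\sum_{k=0}^2x_k\log(3x_k)+r\,x_0-\frac r2(x_1+x_2)$ (external field of magnitude $r$, angle $\pi$). Let $h(t)=-3t(1-2t)\log\frac{1-2t}{t}-3t+1$, $f_r(t)=\frac{2}{3(1-r-3t)}\log\frac{1-2t}{t}$, $k_r=(1-r)/3$; for $0<r<1$, $m_0(r)$ is the unique solution in $(0,k_r)$ of $h(t)=r$; $r_2^\beta$ is the unique $r\in(0,1)$ with $f_r(m_0(r))=\beta$; $r_1^\beta=1-\frac2\beta-\frac{2}{3\beta}\log(\frac{3\beta}2-2)$.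 For every $r>0$, $q_\beta(r)$ is the unique solution of $f_r(t)=\beta$ in $(1/3,1/2)$ and $\boldsymbol{\sigma}_0^\beta(r)=(q_\beta(r),q_\beta(r))$; for $r\in(0,r_2^\beta)$, $u_\beta(r)$ is the unique solution of $f_r(t)=\beta$ in $(m_0(r),k_r)$ and $\mathbf{p}^\beta(r)=(u_\beta(r),u_\beta(r))$. Let $G_\beta(x)=\frac1\beta\log x-\frac32x$, $l_\beta=2/(3\beta)$, $g_\beta=G_\beta(l_\beta)$; for $y<g_\beta$, $H_\beta(y)<l_\beta<K_\beta(y)$ solve $G_\beta(x)=y$, and $H_\beta(g_\beta)=K_\beta(g_\beta)=l_\beta$. For $r\le r_1^\beta$, $y_1^\beta(r)$ is the unique $y\le g_\beta$ with $K_\beta(y-3r/2)+H_\beta(y)+K_\beta(y)=1$, and $\boldsymbol{\sigma}_1^\beta(r)=(K_\beta(y_1^\beta(r)),H_\beta(y_1^\beta(r)))$. *)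

From Stdlib Require Import Reals Lra ClassicalEpsilon.
Open Scope R_scope.

(* "the unique x such that P x": Hilbert choice; when P has exactly one
   witness (as asserted in the paper) this is that witness. *)
Definition the_unique (P : R -> Prop) : R := epsilon (inhabits 0) P.

Definition vx (k : nat) : R := cos (2 * PI * INR k / 3).
Definition vy (k : nat) : R := sin (2 * PI * INR k / 3).

Definition Fb (beta x1 x2 r : R) : R :=
  let x0 := 1 - x1 - x2 in
  let sx := x0 * vx 0 + x1 * vx 1 + x2 * vx 2 in
  let sy := x0 * vy 0 + x1 * vy 1 + x2 * vy 2 in
  - / 2 * (sx ^ 2 + sy ^ 2)
  + / beta * (x0 * ln (3 * x0) + x1 * ln (3 * x1) + x2 * ln (3 * x2))
  + r * x0 - r / 2 * (x1 + x2).

Definition hfun (t : R) : R :=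
  - 3 * t * (1 - 2 * t) * ln ((1 - 2 * t) / t) - 3 * t + 1.

Definition fr (r t : R) : R :=
  2 / (3 * (1 - r - 3 * t)) * ln ((1 - 2 * t) / t).

Definition kr (r : R) : R := (1 - r) / 3.

Definition m0 (r : R) : R :=
  the_unique (fun t => 0 < t < kr r /\ hfun t = r).

Definition r2 (beta : R) : R :=
  the_unique (fun r => 0 < r < 1 /\ fr r (m0 r) = beta).

Definition r1 (beta : R) : R :=
  1 - 2 / beta - 2 / (3 * beta) * ln (3 * beta / 2 - 2).

Definition qb (beta r : R) : R :=
  the_unique (fun t => 1 / 3 < t < 1 / 2 /\ fr r t = beta).

Definition ub (beta r : R) : R :=
  the_unique (fun t => m0 r < t < kr r /\ fr r t = beta).

Definition Gb (beta x : R) : R := / beta * ln x - 3 / 2 * x.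
Definition lb (beta : R) : R := 2 / (3 * beta).
Definition gb (beta : R) : R := Gb beta (lb beta).

Definition Hb (beta y : R) : R :=
  if Rlt_dec y (gb beta)
  then the_unique (fun x => 0 < x < lb beta /\ Gb beta x = y)
  else lb beta.

Definition Kb (beta y : R) : R :=
  if Rlt_dec y (gb beta)
  then the_unique (fun x => lb beta < x /\ Gb beta x = y)
  else lb beta.

Definition y1 (beta r : R) : R :=
  the_unique (fun y => y <= gb beta /\
     Kb beta (y - 3 * r / 2) + Hb beta y + Kb beta y = 1).

Definition h0 (beta r : R) : R := Fb beta (qb beta r) (qb beta r) r.

Definition h1_sigma1 (beta r : R) : R :=
  Fb beta (Kb beta (y1 beta r)) (Hb beta (y1 beta r)) r.

Definition h1_p (beta r : R) : R := Fb beta (ub beta r) (ub beta r) r.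

(* On the symmetric line [x1 = x2] write [phi t = Fb beta t t r]; its derivative is
   [dphi t = 3 (1 - r - 3 t) - 2/beta ln ((1 - 2 t)/t)], which is negative at [1/3] and
   decreasing then increasing on [[1/4, 1/2)], so [sigma_0 = (q, q)] minimises [phi] on
   [[1/3, 1/2)].

   For [r < r1], write [sigma_1 = (b, c)] with [x0 = a], so that [a, b >= lb] and
   [Gb a = Gb b - 3 r / 2]. The one-site energy [Wb x = -3/4 x^2 + x ln (3 x) / beta] is
   concave on [[lb, +oo)] with [Wb' = Gb + const], and its tangent bounds at [a] and [b]
   show that replacing [a] and [b] by their mean [t] does not increase [Fb]. Swapping the
   coordinates [x0 = t] and [x2 = c] then lowers [Fb] by [3 r (t - c) / 2 > 0] and lands at
   [(t, t)] with [t >= 1/3], where [phi q <= phi t].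

   For [r1 < r < r2], [p = (u, u)] lies on the symmetric line with [u < kr < 1/3]:
   [dphi <= 0] on [[u, kr]] because [fr r] is increasing beyond [m0 r] and equals [beta]
   at [u], and [dphi < 0] on [(kr, 1/3)]; so [phi u >= phi kr > phi (1/3) >= phi q].

   The quantities defined by [the_unique] are only used through their defining
   properties, whose solvability follows from the intermediate value theorem. *)

From Stdlib Require Import Reals Lra ClassicalEpsilon Ranalysis5.
From Coquelicot Require Import Coquelicot.
Open Scope R_scope.

Lemma the_unique_spec (P : R -> Prop) : (exists x, P x) -> P (the_unique P).
Proof. exact (epsilon_spec (inhabits 0) P). Qed.

Lemma is_derive_continuity_pt f x l : is_derive f x l -> continuity_pt f x.
Proof.
  intro Hd. apply continuity_pt_filterlim. apply (ex_derive_continuous f x). now exists l.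
Qed.

Lemma mvt_interior f df a b : a < b ->
  (forall x, a <= x <= b -> is_derive f x (df x)) ->
  exists c, a < c < b /\ f b - f a = df c * (b - a).
Proof.
  intros Hab Hd. destruct (MVT_cor2 f df a b Hab) as [c [E Hc]].
  - intros c Hc. apply is_derive_Reals, Hd, Hc.
  - now exists c.
Qed.

Lemma incr_of_derive_pos f df a b : a < b ->
  (forall x, a <= x <= b -> is_derive f x (df x)) ->
  (forall x, a < x < b -> 0 < df x) -> f a < f b.
Proof.
  intros Hab Hd Hs. destruct (mvt_interior f df a b Hab Hd) as [c [Hc E]].
  pose proof (Hs c Hc). nra.
Qed.

Lemma decr_of_derive_neg f df a b : a < b ->
  (forall x, a <= x <= b -> is_derive f x (df x)) ->
  (forall x, a < x < b -> df x < 0) -> f b < f a.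
Proof.
  intros Hab Hd Hs. destruct (mvt_interior f df a b Hab Hd) as [c [Hc E]].
  pose proof (Hs c Hc). nra.
Qed.

Lemma nondecr_of_derive_nonneg f df a b : a <= b ->
  (forall x, a <= x <= b -> is_derive f x (df x)) ->
  (forall x, a < x < b -> 0 <= df x) -> f a <= f b.
Proof.
  intros Hab Hd Hs. destruct (Req_dec a b) as [<- | Hne]; [lra|].
  destruct (mvt_interior f df a b ltac:(lra) Hd) as [c [Hc E]].
  pose proof (Hs c Hc). nra.
Qed.

Lemma nonincr_of_derive_nonpos f df a b : a <= b ->
  (forall x, a <= x <= b -> is_derive f x (df x)) ->
  (forall x, a < x < b -> df x <= 0) -> f b <= f a.
Proof.
  intros Hab Hd Hs. destruct (Req_dec a b) as [<- | Hne]; [lra|].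
  destruct (mvt_interior f df a b ltac:(lra) Hd) as [c [Hc E]].
  pose proof (Hs c Hc). nra.
Qed.

Lemma le_tangent_of_derive_nonincr f df lo a t :
  (forall x, lo <= x -> is_derive f x (df x)) ->
  (forall x y, lo <= x -> x <= y -> df y <= df x) ->
  lo <= a -> lo <= t -> f t <= f a + df a * (t - a).
Proof.
  intros Hd Hdf Ha Ht. destruct (Rtotal_order a t) as [Hat | [<- | Hta]].
  - destruct (mvt_interior f df a t Hat) as [c [Hc E]]; [intros; apply Hd; lra|].
    pose proof (Hdf a c Ha ltac:(lra)). nra.
  - lra.
  - destruct (mvt_interior f df t a Hta) as [c [Hc E]]; [intros; apply Hd; lra|].
    pose proof (Hdf c a ltac:(lra) ltac:(lra)). nra.
Qed.

Lemma continuity_pt_recip_decr (f g : R -> R) lo hi : lo < hi ->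
  (forall x y, lo <= x -> x < y -> y <= hi -> f y < f x) ->
  (forall y, f hi <= y <= f lo -> f (g y) = y /\ lo <= g y <= hi) ->
  (forall x, lo <= x <= hi -> continuity_pt f x) ->
  forall y, f hi < y < f lo -> continuity_pt g y.
Proof.
  intros Hlh Hdecr Hinv Hcont y Hy.
  assert (C : continuity_pt (fun z => - g z) y).
  { apply (continuity_pt_recip_interv (fun x => f (- x)) (fun z => - g z) (- hi) (- lo));
      rewrite ?Ropp_involutive; try lra.
    - intros x z Hx Hxz Hz. apply Hdecr; lra.
    - intros z Hz1 Hz2. unfold comp, id. rewrite Ropp_involutive. apply Hinv; lra.
    - intros z Hz1 Hz2. pose proof (proj2 (Hinv z (conj Hz1 Hz2))). lra.
    - intros x Hx. apply (continuity_pt_comp Ropp f).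
      + apply continuity_pt_opp, continuity_pt_id.
      + apply Hcont. lra. }
  apply (continuity_pt_ext (fun z => - (- g z))); [intro; ring|].
  now apply continuity_pt_opp.
Qed.

Lemma ln_le_sub_1 x : 0 < x -> ln x <= x - 1.
Proof. intro Hx. pose proof (exp_ineq1_le (ln x)). rewrite exp_ln in *; lra. Qed.

Lemma ln_4_lt_3_2 : ln 4 < 3 / 2.
Proof.
  rewrite <- (ln_exp (3 / 2)). apply ln_increasing; [lra|].
  pose proof (exp_ge_taylor (3 / 2) 4 ltac:(lra)) as H. simpl in H. lra.
Qed.

Lemma vertex0 : vx 0 = 1 /\ vy 0 = 0.
Proof.
  unfold vx, vy; simpl. replace (2 * PI * 0 / 3) with 0 by field.
  now rewrite cos_0, sin_0.
Qed.

Lemma vertex1 : vx 1 = - / 2 /\ vy 1 = sqrt 3 / 2.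
Proof.
  unfold vx, vy; simpl. replace (2 * PI * 1 / 3) with (PI - PI / 3) by field.
  rewrite Rtrigo_facts.cos_pi_minus, sin_PI_x, cos_PI3, sin_PI3. split; field.
Qed.

Lemma vertex2 : vx 2 = - / 2 /\ vy 2 = - (sqrt 3 / 2).
Proof.
  unfold vx, vy; simpl. replace (2 * PI * (1 + 1) / 3) with (PI / 3 + PI) by field.
  rewrite neg_cos, neg_sin, cos_PI3, sin_PI3. split; field.
Qed.

Definition Wb (beta x : R) : R := - (3 / 4) * x ^ 2 + / beta * (x * ln (3 * x)).

(* Expanding the squared norm with [|v_k| = 1] and [v_j . v_k = -1/2] for [j <> k]. *)
Lemma Fb_decomp beta x1 x2 r : Fb beta x1 x2 r =
  Wb beta (1 - x1 - x2) + Wb beta x1 + Wb beta x2 + / 4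
  + r * (1 - x1 - x2) - r / 2 * (x1 + x2).
Proof.
  unfold Fb, Wb.
  destruct vertex0 as [-> ->], vertex1 as [-> ->], vertex2 as [-> ->].
  assert (H3 : sqrt 3 * sqrt 3 * (x1 - x2) ^ 2 = 3 * (x1 - x2) ^ 2)
    by (rewrite sqrt_sqrt; lra).
  set (s := sqrt 3) in *. set (ib := / beta). set (l0 := ln (3 * (1 - x1 - x2))).
  set (l1 := ln (3 * x1)). set (l2 := ln (3 * x2)). simpl. lra.
Qed.

Lemma Fb_sym_shift beta t c r : 2 * t + c = 1 ->
  Fb beta t c r - Fb beta t t r = 3 / 2 * r * (t - c).
Proof.
  intro E. rewrite !Fb_decomp.
  replace (1 - t - c) with t by lra. replace (1 - t - t) with c by lra. lra.
Qed.

Definition ln_ratio (t : R) : R := ln ((1 - 2 * t) / t).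

Lemma ln_ratio_one_third : ln_ratio (1 / 3) = 0.
Proof. unfold ln_ratio. replace ((1 - 2 * (1 / 3)) / (1 / 3)) with 1 by field. apply ln_1. Qed.

Lemma ln_ratio_pos t : 0 < t < 1 / 3 -> 0 < ln_ratio t.
Proof.
  intro Ht. unfold ln_ratio. rewrite <- ln_1. apply ln_increasing; [lra|].
  apply (Rmult_lt_reg_r t); [lra|]. field_simplify; lra.
Qed.

Definition phi (beta r t : R) : R := Fb beta t t r.

Definition dphi (beta r t : R) : R := 3 * (1 - r - 3 * t) - 2 / beta * ln_ratio t.

Lemma dphi_one_third beta r : dphi beta r (1 / 3) = - 3 * r.
Proof. unfold dphi. rewrite ln_ratio_one_third. lra. Qed.

Lemma dphi_fr beta r t : beta <> 0 -> 1 - r - 3 * t <> 0 ->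
  dphi beta r t = 3 * (1 - r - 3 * t) * (1 - fr r t / beta).
Proof. intros Hb Ht. unfold dphi, fr, ln_ratio. field. auto. Qed.

Lemma fr_eq_iff_dphi_eq0 beta r t : beta <> 0 -> 1 - r - 3 * t <> 0 ->
  fr r t = beta <-> dphi beta r t = 0.
Proof.
  intros Hb Ht. rewrite dphi_fr by auto. split.
  - intros ->. field. auto.
  - intro E. destruct (Rmult_integral _ _ E) as [E' | E']; [lra|].
    apply (Rmult_eq_reg_r (/ beta)); [|now apply Rinv_neq_0_compat].
    unfold Rdiv in E'. rewrite Rinv_r by auto. lra.
Qed.

Lemma phi_derive beta r t : 0 < t < 1 / 2 -> is_derive (phi beta r) t (dphi beta r t).
Proof.
  intro Ht. apply (is_derive_ext (fun t => Wb beta (1 - t - t) + Wb beta t + Wb beta t + / 4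
                                           + r * (1 - t - t) - r / 2 * (t + t))).
  { intro s. unfold phi. now rewrite Fb_decomp. }
  unfold Wb, dphi, ln_ratio. auto_derive; [lra|].
  replace ((1 - 2 * t) / t) with (3 * (1 + - t + - t) / (3 * t)) by (field; lra).
  rewrite ln_div by lra. set (ib := / beta). unfold Rdiv. fold ib. field. lra.
Qed.

Lemma dphi_derive beta r t : beta <> 0 -> 0 < t < 1 / 2 ->
  is_derive (dphi beta r) t ((2 - 9 * beta * (t * (1 - 2 * t))) / (beta * (t * (1 - 2 * t)))).
Proof.
  intros Hb Ht. unfold dphi, ln_ratio. auto_derive.
  - repeat split; try lra. apply Rdiv_lt_0_compat; lra.
  - field. repeat split; lra.
Qed.

Section PositiveBeta.

Variable beta : R.
Hypothesis beta_pos : 0 < beta.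

Lemma lb_pos : 0 < lb beta.
Proof. unfold lb. apply Rdiv_lt_0_compat; lra. Qed.

Lemma Gb_derive x : 0 < x -> is_derive (Gb beta) x (3 / (2 * x) * (lb beta - x)).
Proof. intro Hx. unfold Gb, lb. auto_derive; [lra|]. field. lra. Qed.

Lemma Gb_continuity_pt x : 0 < x -> continuity_pt (Gb beta) x.
Proof. intro Hx. exact (is_derive_continuity_pt _ _ _ (Gb_derive x Hx)). Qed.

Lemma Gb_incr x y : 0 < x -> x < y -> y <= lb beta -> Gb beta x < Gb beta y.
Proof.
  intros Hx Hxy Hy. apply (incr_of_derive_pos _ (fun z => 3 / (2 * z) * (lb beta - z))); auto.
  - intros z Hz. apply Gb_derive. lra.
  - intros z Hz. apply Rmult_lt_0_compat; [apply Rdiv_lt_0_compat|]; lra.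
Qed.

Lemma Gb_decr x y : lb beta <= x -> x < y -> Gb beta y < Gb beta x.
Proof.
  intros Hx Hxy. pose proof lb_pos.
  apply (decr_of_derive_neg _ (fun z => 3 / (2 * z) * (lb beta - z))); auto.
  - intros z Hz. apply Gb_derive. lra.
  - intros z Hz. assert (0 < 3 / (2 * z)) by (apply Rdiv_lt_0_compat; lra). nra.
Qed.

Lemma Gb_lt_gb x : 0 < x -> x <> lb beta -> Gb beta x < gb beta.
Proof.
  intros Hx Hxl. unfold gb. destruct (Rlt_dec x (lb beta)).
  - apply Gb_incr; lra.
  - apply Gb_decr; lra.
Qed.

Lemma Gb_le_gb x : 0 < x -> Gb beta x <= gb beta.
Proof.
  intro Hx. destruct (Req_dec x (lb beta)) as [-> | Hxl]; [unfold gb; lra|].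
  left. now apply Gb_lt_gb.
Qed.

Lemma Hb_branch_exists y : y < gb beta -> exists x, 0 < x < lb beta /\ Gb beta x = y.
Proof.
  intro Hy. pose proof lb_pos. pose proof (exp_pos (beta * y)).
  set (x0 := Rmin (lb beta / 2) (exp (beta * y) / 2)).
  assert (Hx0 : 0 < x0 <= lb beta / 2 /\ x0 <= exp (beta * y) / 2)
    by (repeat split; [apply Rmin_glb_lt; lra | apply Rmin_l | apply Rmin_r]).
  assert (HG0 : Gb beta x0 < y).
  { assert (ln x0 < beta * y)
      by (rewrite <- (ln_exp (beta * y)); apply ln_increasing; lra).
    unfold Gb. assert (/ beta * ln x0 < y).
    { apply (Rmult_lt_reg_l beta); [lra|]. rewrite <- Rmult_assoc, Rinv_r; lra. }
    lra. }
  unfold gb in Hy.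
  destruct (IVT_interv (fun x => Gb beta x - y) x0 (lb beta)) as [z [Hz Ez]]; try lra.
  - intros a Ha. apply continuity_pt_minus; [apply Gb_continuity_pt; lra|].
    apply continuity_pt_const. now intros u v.
  - exists z. assert (z <> lb beta) by (intros ->; lra). split; lra.
Qed.

(* Uses [ln (beta x) <= beta x - 1], so that [Gb x <= - x / 2 - (1 + ln beta) / beta]. *)
Lemma Kb_branch_exists y : y < gb beta -> exists x, lb beta < x /\ Gb beta x = y.
Proof.
  intro Hy. pose proof lb_pos. set (C := (1 + ln beta) / beta).
  set (x1 := Rmax (2 * lb beta) (2 * (Rabs y + Rabs C) + 1)).
  assert (Hx1 : 2 * lb beta <= x1 /\ 2 * (Rabs y + Rabs C) + 1 <= x1)
    by (split; [apply Rmax_l | apply Rmax_r]).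
  assert (HG1 : Gb beta x1 < y).
  { assert (Hln : ln (beta * x1) <= beta * x1 - 1) by (apply ln_le_sub_1; nra).
    rewrite ln_mult in Hln by lra.
    assert (Hdiv : / beta * ln x1 <= / beta * (beta * x1 - 1 - ln beta))
      by (apply Rmult_le_compat_l; [left; apply Rinv_0_lt_compat |]; lra).
    replace (/ beta * (beta * x1 - 1 - ln beta)) with (x1 - C) in Hdiv by (unfold C; field; lra).
    assert (Gb beta x1 <= - x1 / 2 - C) by (unfold Gb; lra).
    pose proof (Rle_abs (- y)). pose proof (Rle_abs (- C)). rewrite Rabs_Ropp in *. lra. }
  unfold gb in Hy.
  destruct (IVT_interv (fun x => y - Gb beta x) (lb beta) x1) as [z [Hz Ez]]; try lra.
  - intros a Ha. apply continuity_pt_minus; [|apply Gb_continuity_pt; lra].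
    apply continuity_pt_const. now intros u v.
  - exists z. assert (z <> lb beta) by (intros ->; lra). split; lra.
Qed.

Lemma Hb_spec y : y <= gb beta -> 0 < Hb beta y <= lb beta /\ Gb beta (Hb beta y) = y.
Proof.
  intro Hy. pose proof lb_pos. unfold Hb. destruct (Rlt_dec y (gb beta)) as [Hlt | Hge].
  - destruct (the_unique_spec _ (Hb_branch_exists y Hlt)) as [Hx Ex]. split; [lra | exact Ex].
  - replace y with (gb beta) by lra. unfold gb. split; lra.
Qed.

Lemma Kb_spec y : y <= gb beta -> lb beta <= Kb beta y /\ Gb beta (Kb beta y) = y.
Proof.
  intro Hy. unfold Kb. destruct (Rlt_dec y (gb beta)) as [Hlt | Hge].
  - destruct (the_unique_spec _ (Kb_branch_exists y Hlt)) as [Hx Ex]. split; [lra | exact Ex].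
  - replace y with (gb beta) by lra. unfold gb. split; lra.
Qed.

Lemma Hb_incr y y' : y < y' -> y' <= gb beta -> Hb beta y < Hb beta y'.
Proof.
  intros Hyy' Hy'. destruct (Hb_spec y ltac:(lra)) as [H1 E1].
  destruct (Hb_spec y' Hy') as [H2 E2].
  destruct (Rtotal_order (Hb beta y) (Hb beta y')) as [Hlt | [Heq | Hgt]]; auto; exfalso.
  - rewrite Heq in E1. lra.
  - pose proof (Gb_incr _ _ (proj1 H2) Hgt (proj2 H1)). lra.
Qed.

Lemma Kb_decr y y' : y < y' -> y' <= gb beta -> Kb beta y' < Kb beta y.
Proof.
  intros Hyy' Hy'. destruct (Kb_spec y ltac:(lra)) as [H1 E1].
  destruct (Kb_spec y' Hy') as [H2 E2].
  destruct (Rtotal_order (Kb beta y') (Kb beta y)) as [Hlt | [Heq | Hgt]]; auto; exfalso.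
  - rewrite Heq in E2. lra.
  - pose proof (Gb_decr _ _ H1 Hgt). lra.
Qed.

Lemma Hb_Gb x : 0 < x <= lb beta -> Hb beta (Gb beta x) = x.
Proof.
  intro Hx. destruct (Hb_spec (Gb beta x) (Gb_le_gb x (proj1 Hx))) as [H1 E1].
  destruct (Rtotal_order (Hb beta (Gb beta x)) x) as [Hlt | [Heq | Hgt]]; auto; exfalso.
  - pose proof (Gb_incr _ _ (proj1 H1) Hlt (proj2 Hx)). lra.
  - pose proof (Gb_incr _ _ (proj1 Hx) Hgt (proj2 H1)). lra.
Qed.

Lemma Kb_Gb x : lb beta <= x -> Kb beta (Gb beta x) = x.
Proof.
  intro Hx. pose proof lb_pos.
  destruct (Kb_spec (Gb beta x) (Gb_le_gb x ltac:(lra))) as [H1 E1].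
  destruct (Rtotal_order (Kb beta (Gb beta x)) x) as [Hlt | [Heq | Hgt]]; auto; exfalso.
  - pose proof (Gb_decr _ _ H1 Hlt). lra.
  - pose proof (Gb_decr _ _ Hx Hgt). lra.
Qed.

Lemma Hb_lt_lb y : y < gb beta -> Hb beta y < lb beta.
Proof.
  intro Hy. pose proof lb_pos. rewrite <- (Hb_Gb (lb beta)) by lra.
  apply Hb_incr; unfold gb in *; lra.
Qed.

Lemma lb_lt_Kb y : y < gb beta -> lb beta < Kb beta y.
Proof.
  intro Hy. rewrite <- (Kb_Gb (lb beta)) at 1 by lra.
  apply Kb_decr; unfold gb in *; lra.
Qed.

Lemma Hb_continuity_pt y : y < gb beta -> continuity_pt (Hb beta) y.
Proof.
  intro Hy. destruct (Hb_spec y ltac:(lra)) as [Hc Ec]. pose proof (Hb_lt_lb y Hy).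
  set (c := Hb beta y) in *. set (lo := c / 2). set (hi := (c + lb beta) / 2).
  assert (Hlohi : 0 < lo < c /\ c < hi < lb beta) by (unfold lo, hi; lra).
  apply (continuity_pt_recip_interv (Gb beta) (Hb beta) lo hi); try lra.
  - intros x z Hx Hxz Hz. apply Gb_incr; lra.
  - intros z Hz1 Hz2. unfold comp, id. apply Hb_spec.
    pose proof (Gb_le_gb hi ltac:(lra)). lra.
  - intros z Hz1 Hz2. rewrite <- (Hb_Gb lo), <- (Hb_Gb hi) by lra.
    pose proof (Gb_le_gb hi ltac:(lra)).
    split; [destruct Hz1 as [Hz1 | <-] | destruct Hz2 as [Hz2 | ->]]; try lra;
      left; apply Hb_incr; lra.
  - intros x Hx. apply Gb_continuity_pt. lra.
  - rewrite <- Ec. split; apply Gb_incr; lra.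
Qed.

Lemma Kb_continuity_pt y : y < gb beta -> continuity_pt (Kb beta) y.
Proof.
  intro Hy. pose proof lb_pos. pose proof (lb_lt_Kb y Hy).
  destruct (Kb_spec y ltac:(lra)) as [Hc Ec].
  set (c := Kb beta y) in *. set (lo := (c + lb beta) / 2). set (hi := c + 1).
  assert (Hlohi : lb beta < lo < c /\ c < hi) by (unfold lo, hi; lra).
  apply (continuity_pt_recip_decr (Gb beta) (Kb beta) lo hi); try lra.
  - intros x z Hx Hxz Hz. apply Gb_decr; lra.
  - intros z Hz. assert (Gb beta lo <= gb beta) by (apply Gb_le_gb; lra).
    split; [apply Kb_spec; lra|].
    rewrite <- (Kb_Gb lo), <- (Kb_Gb hi) by lra.
    split; [destruct (proj2 Hz) as [Hz2 | ->] | destruct (proj1 Hz) as [Hz1 | <-]]; try lra;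
      left; apply Kb_decr; lra.
  - intros x Hx. apply Gb_continuity_pt. lra.
  - rewrite <- Ec. split; apply Gb_decr; lra.
Qed.

Lemma Wb_derive x : 0 < x -> is_derive (Wb beta) x (Gb beta x + (ln 3 + 1) / beta).
Proof.
  intro Hx. unfold Wb, Gb. auto_derive; [lra|].
  rewrite ln_mult by lra. field. lra.
Qed.

Lemma Wb_le_tangent a t : lb beta <= a -> lb beta <= t ->
  Wb beta t <= Wb beta a + (Gb beta a + (ln 3 + 1) / beta) * (t - a).
Proof.
  pose proof lb_pos.
  apply (le_tangent_of_derive_nonincr _ (fun x => Gb beta x + (ln 3 + 1) / beta)).
  - intros x Hx. apply Wb_derive. lra.
  - intros x y Hx Hxy. destruct Hxy as [Hxy | <-]; [|lra].
    pose proof (Gb_decr x y Hx Hxy). lra.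
Qed.

(* The two tangent bounds gain [(Gb b - Gb a) (b - a) / 2 = 3 r (b - a) / 4], exactly what
   the external field loses. *)
Lemma Fb_average_le r a b : lb beta <= a -> lb beta <= b ->
  Gb beta a = Gb beta b - 3 * r / 2 ->
  Fb beta ((a + b) / 2) (1 - a - b) r <= Fb beta b (1 - a - b) r.
Proof.
  intros Ha Hb HG. rewrite !Fb_decomp.
  replace (1 - (a + b) / 2 - (1 - a - b)) with ((a + b) / 2) by lra.
  replace (1 - b - (1 - a - b)) with a by lra.
  pose proof (Wb_le_tangent a ((a + b) / 2) Ha ltac:(lra)) as Ta.
  pose proof (Wb_le_tangent b ((a + b) / 2) Hb ltac:(lra)) as Tb.
  rewrite HG in Ta. set (C := (ln 3 + 1) / beta) in *. set (g := Gb beta b) in *.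
  nra.
Qed.

Lemma qb_exists r : 0 < r -> exists t, 1 / 3 < t < 1 / 2 /\ fr r t = beta.
Proof.
  intro Hr. set (M := beta * (3 * r + 1)). assert (HM : 0 < M) by (unfold M; nra).
  assert (He : 0 < exp (- M) < 1)
    by (split; [apply exp_pos | rewrite <- exp_0; apply exp_increasing; lra]).
  set (t1 := 1 / (2 + exp (- M))).
  assert (Ht1 : 1 / 3 < t1 < 1 / 2)
    by (unfold t1; split; apply (Rmult_lt_reg_r (2 + exp (- M))); try lra; field_simplify; lra).
  assert (HL : ln_ratio t1 = - M).
  { unfold ln_ratio. replace ((1 - 2 * t1) / t1) with (exp (- M)); [apply ln_exp|].
    unfold t1. field. lra. }
  destruct (IVT_interv (dphi beta r) (1 / 3) t1) as [z [Hz Ez]].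
  - intros a Ha. apply (is_derive_continuity_pt _ _ _ (dphi_derive beta r a ltac:(lra) ltac:(lra))).
  - lra.
  - rewrite dphi_one_third. lra.
  - unfold dphi. rewrite HL. unfold M.
    replace (2 / beta * - (beta * (3 * r + 1))) with (- 2 * (3 * r + 1)) by (field; lra). lra.
  - assert (z <> 1 / 3) by (intros ->; rewrite dphi_one_third in Ez; lra).
    exists z. split; [lra|]. apply fr_eq_iff_dphi_eq0; lra.
Qed.

Lemma qb_spec r : 0 < r -> 1 / 3 < qb beta r < 1 / 2 /\ dphi beta r (qb beta r) = 0.
Proof.
  intro Hr. unfold qb. destruct (the_unique_spec _ (qb_exists r Hr)) as [Hq Eq].
  split; [exact Hq|]. apply fr_eq_iff_dphi_eq0; [lra | lra | exact Eq].
Qed.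

Lemma dphi_nonincr r a b : 1 / 4 <= a <= b -> b < 1 / 2 ->
  2 <= 9 * beta * (b * (1 - 2 * b)) -> dphi beta r b <= dphi beta r a.
Proof.
  intros Hab Hb Hsgn. apply (nonincr_of_derive_nonpos _ (fun x =>
    (2 - 9 * beta * (x * (1 - 2 * x))) / (beta * (x * (1 - 2 * x))))); [lra| |].
  - intros x Hx. apply dphi_derive; lra.
  - intros x Hx. assert (0 < x * (1 - 2 * x)) by nra.
    assert (0 < / (beta * (x * (1 - 2 * x)))) by (apply Rinv_0_lt_compat; nra).
    assert (b * (1 - 2 * b) <= x * (1 - 2 * x)) by nra.
    assert (2 - 9 * beta * (x * (1 - 2 * x)) <= 0) by nra. unfold Rdiv. nra.
Qed.

Lemma dphi_nondecr r a b : 1 / 4 <= a <= b -> b < 1 / 2 ->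
  9 * beta * (a * (1 - 2 * a)) <= 2 -> dphi beta r a <= dphi beta r b.
Proof.
  intros Hab Hb Hsgn. apply (nondecr_of_derive_nonneg _ (fun x =>
    (2 - 9 * beta * (x * (1 - 2 * x))) / (beta * (x * (1 - 2 * x))))); [lra| |].
  - intros x Hx. apply dphi_derive; lra.
  - intros x Hx. assert (0 < x * (1 - 2 * x)) by nra. apply Rdiv_le_0_compat; [|nra].
    assert (x * (1 - 2 * x) <= a * (1 - 2 * a)) by nra.
    assert (0 <= 9 * beta * (a * (1 - 2 * a) - x * (1 - 2 * x))) by nra. lra.
Qed.

(* [dphi] is decreasing then increasing on [[1/4, 1/2)], and [dphi (1/3) < 0],
   so its only sign change to the right of [1/3] is at [qb]. *)
Lemma dphi_sign_qb r x : 0 < r -> 1 / 3 <= x < 1 / 2 ->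
  (x <= qb beta r -> dphi beta r x <= 0) /\ (qb beta r <= x -> 0 <= dphi beta r x).
Proof.
  intros Hr Hx. destruct (qb_spec r Hr) as [Hq Eq]. pose proof (dphi_one_third beta r).
  split; intro Hxq.
  - destruct (Rle_dec 2 (9 * beta * (x * (1 - 2 * x)))) as [Hs | Hs].
    + pose proof (dphi_nonincr r (1 / 3) x ltac:(lra) ltac:(lra) Hs). lra.
    + pose proof (dphi_nondecr r x (qb beta r) ltac:(lra) ltac:(lra) ltac:(lra)). lra.
  - destruct (Rle_dec 2 (9 * beta * (qb beta r * (1 - 2 * qb beta r)))) as [Hs | Hs].
    + pose proof (dphi_nonincr r (1 / 3) (qb beta r) ltac:(lra) ltac:(lra) Hs). lra.
    + pose proof (dphi_nondecr r (qb beta r) x ltac:(lra) ltac:(lra) ltac:(lra)). lra.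
Qed.

Lemma phi_qb_le r t : 0 < r -> 1 / 3 <= t < 1 / 2 -> phi beta r (qb beta r) <= phi beta r t.
Proof.
  intros Hr Ht. destruct (qb_spec r Hr) as [Hq _].
  destruct (Rle_dec t (qb beta r)) as [Htq | Htq].
  - apply (nonincr_of_derive_nonpos _ (dphi beta r)); [lra | |].
    + intros x Hx. apply phi_derive. lra.
    + intros x Hx. apply (dphi_sign_qb r x Hr); lra.
  - apply (nondecr_of_derive_nonneg _ (dphi beta r)); [lra | |].
    + intros x Hx. apply phi_derive. lra.
    + intros x Hx. apply (dphi_sign_qb r x Hr); lra.
Qed.

Lemma dphi_neg_beyond_kr r x : 0 < r < 1 -> kr r <= x < 1 / 3 -> dphi beta r x < 0.
Proof.
  intros Hr Hx. unfold dphi, kr in *. pose proof (ln_ratio_pos x ltac:(lra)).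
  assert (0 < 2 / beta * ln_ratio x) by (apply Rmult_lt_0_compat; [apply Rdiv_lt_0_compat|]; lra).
  lra.
Qed.

End PositiveBeta.

Definition sigma1_excess (beta r y : R) : R :=
  Kb beta (y - 3 * r / 2) + Hb beta y + Kb beta y - 1.

Section FirstPhase.

Variable beta : R.
Hypothesis beta_gt_2 : 2 < beta.

Lemma lb_lt_one_third : lb beta < 1 / 3.
Proof. unfold lb. apply (Rmult_lt_reg_r (3 * beta)); [lra|]. field_simplify; lra. Qed.

Lemma Gb_1 : Gb beta 1 = - 3 / 2.
Proof. unfold Gb. rewrite ln_1, Rmult_0_r. lra. Qed.

Lemma gb_gt : - 3 / 2 < gb beta.
Proof. pose proof lb_lt_one_third. rewrite <- Gb_1. apply Gb_lt_gb; lra. Qed.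

Lemma Gb_r1 : Gb beta (1 - 2 * lb beta) = gb beta - 3 * r1 beta / 2.
Proof.
  unfold gb, r1, Gb, lb.
  replace (1 - 2 * (2 / (3 * beta))) with (2 / (3 * beta) * (3 * beta / 2 - 2)) by (field; lra).
  assert (0 < 2 / (3 * beta)) by (apply Rdiv_lt_0_compat; lra).
  rewrite ln_mult by lra. field. lra.
Qed.

Lemma r1_pos : 0 < r1 beta.
Proof.
  pose proof lb_lt_one_third. pose proof (lb_pos beta ltac:(lra)).
  pose proof (Gb_lt_gb beta ltac:(lra) (1 - 2 * lb beta) ltac:(lra) ltac:(lra)) as HG.
  rewrite Gb_r1 in HG. lra.
Qed.

Lemma Kb_field_lt r : 0 <= r < r1 beta -> Kb beta (gb beta - 3 * r / 2) < 1 - 2 * lb beta.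
Proof.
  intro Hr. pose proof lb_lt_one_third. pose proof (lb_pos beta ltac:(lra)).
  rewrite <- (Kb_Gb beta ltac:(lra) (1 - 2 * lb beta)) by lra. rewrite Gb_r1.
  apply Kb_decr; lra.
Qed.

Lemma sigma1_excess_continuity_pt r y : 0 <= r -> y < gb beta ->
  continuity_pt (sigma1_excess beta r) y.
Proof.
  intros Hr Hy. unfold sigma1_excess.
  repeat apply continuity_pt_plus || apply continuity_pt_minus.
  - apply (continuity_pt_comp (fun z => z - 3 * r / 2) (Kb beta)).
    + apply continuity_pt_minus; [apply continuity_pt_id |].
      apply continuity_pt_const. now intros u v.
    + apply Kb_continuity_pt; lra.
  - apply Hb_continuity_pt; lra.
  - apply Kb_continuity_pt; lra.
  - apply continuity_pt_const. now intros u v.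
Qed.

Lemma sigma1_excess_pos r : 0 <= r -> 0 < sigma1_excess beta r (- 3 / 2).
Proof.
  intro Hr. pose proof gb_gt. pose proof lb_lt_one_third. pose proof (lb_pos beta ltac:(lra)).
  unfold sigma1_excess. rewrite <- Gb_1 at 3. rewrite Kb_Gb by lra.
  pose proof (Kb_spec beta ltac:(lra) (- 3 / 2 - 3 * r / 2) ltac:(lra)).
  pose proof (Hb_spec beta ltac:(lra) (- 3 / 2) ltac:(lra)). lra.
Qed.

(* Close to [gb], [Kb y] and [Hb y] are close to [lb] while [Kb (y - 3 r / 2)] is close to
   [Kb (gb - 3 r / 2) < 1 - 2 lb]. *)
Lemma sigma1_excess_neg r : 0 <= r < r1 beta ->
  exists y, - 3 / 2 < y < gb beta /\ sigma1_excess beta r y < 0.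
Proof.
  intro Hr. pose proof gb_gt. pose proof lb_lt_one_third. pose proof (lb_pos beta ltac:(lra)).
  pose proof (Kb_field_lt r Hr) as Ha.
  pose proof (Kb_spec beta ltac:(lra) (gb beta - 3 * r / 2) ltac:(lra)) as [Ha' Ea].
  set (a := Kb beta (gb beta - 3 * r / 2)) in *.
  set (e := (1 - 2 * lb beta - a) / 3).
  assert (He : 0 < e) by (unfold e; lra).
  assert (HA1 : Gb beta (lb beta + e) < gb beta) by (apply Gb_lt_gb; lra).
  assert (HA2 : Gb beta (a + e) + 3 * r / 2 < gb beta)
    by (pose proof (Gb_decr beta ltac:(lra) a (a + e) Ha' ltac:(lra)); lra).
  set (m := Rmax (Rmax (Gb beta (lb beta + e)) (Gb beta (a + e) + 3 * r / 2)) (- 3 / 2)).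
  assert (Hm : Gb beta (lb beta + e) <= m /\ Gb beta (a + e) + 3 * r / 2 <= m /\ - 3 / 2 <= m
               /\ m < gb beta).
  { unfold m. repeat split.
    - eapply Rle_trans; [apply Rmax_l | apply Rmax_l].
    - eapply Rle_trans; [apply Rmax_r | apply Rmax_l].
    - apply Rmax_r.
    - repeat apply Rmax_lub_lt; lra. }
  exists ((m + gb beta) / 2). split; [lra|].
  set (y := (m + gb beta) / 2).
  assert (Hby : Kb beta y < lb beta + e).
  { rewrite <- (Kb_Gb beta ltac:(lra) (lb beta + e)) by lra. apply Kb_decr; unfold y; lra. }
  assert (Hab : Kb beta (y - 3 * r / 2) < a + e).
  { rewrite <- (Kb_Gb beta ltac:(lra) (a + e)) by lra. apply Kb_decr; unfold y; lra. }
  pose proof (Hb_spec beta ltac:(lra) y ltac:(unfold y; lra)).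
  unfold sigma1_excess, e in *. lra.
Qed.

Lemma y1_spec r : 0 < r < r1 beta ->
  y1 beta r <= gb beta /\
  Kb beta (y1 beta r - 3 * r / 2) + Hb beta (y1 beta r) + Kb beta (y1 beta r) = 1.
Proof.
  intro Hr. unfold y1. apply the_unique_spec.
  destruct (sigma1_excess_neg r ltac:(lra)) as [y [Hy Ey]].
  pose proof (sigma1_excess_pos r ltac:(lra)).
  destruct (IVT_interv (fun z => - sigma1_excess beta r z) (- 3 / 2) y) as [z [Hz Ez]]; try lra.
  - intros z Hz. apply continuity_pt_opp, sigma1_excess_continuity_pt; lra.
  - exists z. unfold sigma1_excess in Ez. split; lra.
Qed.

(* With [a + b + c = 1] and [t = (a + b) / 2]: [phi (qb) <= phi t < Fb t c <= Fb b c]. *)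
Lemma h0_lt_h1_sigma1 r : 0 < r < r1 beta -> h0 beta r < h1_sigma1 beta r.
Proof.
  intro Hr. destruct (y1_spec r Hr) as [Hy Hsum].
  pose proof lb_lt_one_third. pose proof (lb_pos beta ltac:(lra)).
  unfold h0, h1_sigma1. set (y := y1 beta r) in *.
  destruct (Kb_spec beta ltac:(lra) y Hy) as [Hb' Eb].
  destruct (Kb_spec beta ltac:(lra) (y - 3 * r / 2) ltac:(lra)) as [Ha Ea].
  destruct (Hb_spec beta ltac:(lra) y Hy) as [Hc _].
  set (a := Kb beta (y - 3 * r / 2)) in *. set (b := Kb beta y) in *. set (c := Hb beta y) in *.
  replace c with (1 - a - b) by lra.
  pose proof (phi_qb_le beta ltac:(lra) r ((a + b) / 2) ltac:(lra) ltac:(lra)) as Hphi.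
  pose proof (Fb_sym_shift beta ((a + b) / 2) (1 - a - b) r ltac:(lra)) as Hshift.
  pose proof (Fb_average_le beta ltac:(lra) r a b Ha Hb' ltac:(lra)) as Havg.
  unfold phi in Hphi. nra.
Qed.

End FirstPhase.

Lemma hfun_ln_ratio t : hfun t = - 3 * (t * (1 - 2 * t)) * ln_ratio t - 3 * t + 1.
Proof. unfold hfun, ln_ratio. ring. Qed.

Lemma hfun_derive t : 0 < t < 1 / 2 -> is_derive hfun t (- 3 * (1 - 4 * t) * ln_ratio t).
Proof.
  intro Ht. unfold hfun, ln_ratio. auto_derive.
  - repeat split; try lra. apply Rdiv_lt_0_compat; lra.
  - change (ln ((1 + - (2 * t)) * / t)) with (ln ((1 - 2 * t) / t)). field. lra.
Qed.

Lemma hfun_one_third : hfun (1 / 3) = 0.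
Proof. rewrite hfun_ln_ratio, ln_ratio_one_third. lra. Qed.

Lemma hfun_decr x y : 0 < x -> x < y -> y <= 1 / 4 -> hfun y < hfun x.
Proof.
  intros Hx Hxy Hy. apply (decr_of_derive_neg _ (fun t => - 3 * (1 - 4 * t) * ln_ratio t)); auto.
  - intros t Ht. apply hfun_derive. lra.
  - intros t Ht. pose proof (ln_ratio_pos t ltac:(lra)). nra.
Qed.

Lemma hfun_nonpos x : 1 / 4 <= x <= 1 / 3 -> hfun x <= 0.
Proof.
  intro Hx. rewrite <- hfun_one_third.
  apply (nondecr_of_derive_nonneg _ (fun t => - 3 * (1 - 4 * t) * ln_ratio t)); [lra| |].
  - intros t Ht. apply hfun_derive. lra.
  - intros t Ht. pose proof (ln_ratio_pos t ltac:(lra)). nra.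
Qed.

Lemma hfun_lt_1 t : 0 < t < 1 / 3 -> hfun t < 1.
Proof.
  intro Ht. rewrite hfun_ln_ratio. pose proof (ln_ratio_pos t Ht).
  assert (0 < t * (1 - 2 * t)) by nra. nra.
Qed.

(* [ln_ratio (s^2) <= 2 ln (1/s) <= 2 (1/s - 1)]. *)
Lemma hfun_sq_gt s : 0 < s < 1 / 2 -> 1 - 9 * s < hfun (s * s).
Proof.
  intro Hs. assert (Hs2 : 0 < s * s < 1 / 3) by nra.
  pose proof (ln_ratio_pos (s * s) Hs2) as HL.
  assert (HLb : ln_ratio (s * s) <= 2 * (/ s - 1)).
  { unfold ln_ratio. apply Rle_trans with (ln (/ s * / s)).
    - apply ln_le; [apply Rdiv_lt_0_compat; lra|].
      rewrite <- Rinv_mult. unfold Rdiv. pose proof (Rinv_0_lt_compat (s * s) ltac:(lra)). nra.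
    - pose proof (Rinv_0_lt_compat s ltac:(lra)).
      rewrite ln_mult by lra. pose proof (ln_le_sub_1 (/ s) ltac:(lra)). lra. }
  assert (s * s * ln_ratio (s * s) <= 2 * s * (1 - s)).
  { replace (2 * s * (1 - s)) with (s * s * (2 * (/ s - 1))) by (field; lra).
    apply Rmult_le_compat_l; nra. }
  rewrite hfun_ln_ratio. nra.
Qed.

Lemma m0_exists r : 0 < r < 1 -> exists t, 0 < t < kr r /\ hfun t = r.
Proof.
  intro Hr. set (s := (1 - r) / 9).
  assert (Hs : 0 < s < 1 / 9 /\ s * s < s /\ s < kr r) by (unfold s, kr; repeat split; nra).
  pose proof (hfun_sq_gt s ltac:(lra)) as Hsq.
  assert (Hk : hfun (kr r) < r).
  { rewrite hfun_ln_ratio. assert (Hk' : 0 < kr r < 1 / 3) by (unfold kr; lra).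
    pose proof (ln_ratio_pos (kr r) Hk'). assert (0 < kr r * (1 - 2 * kr r)) by nra.
    unfold kr in *. nra. }
  destruct (IVT_interv (fun t => r - hfun t) (s * s) (kr r)) as [z [Hz Ez]]; try lra.
  - intros a Ha. apply continuity_pt_minus; [apply continuity_pt_const; now intros u v|].
    apply (is_derive_continuity_pt _ _ _ (hfun_derive a ltac:(unfold kr in *; nra))).
  - assert (1 - 9 * s = r) by (unfold s; field). lra.
  - exists z. assert (z <> kr r) by (intros ->; lra). split; [nra | lra].
Qed.

Lemma m0_spec r : 0 < r < 1 -> 0 < m0 r < 1 / 4 /\ m0 r < kr r /\ hfun (m0 r) = r.
Proof.
  intro Hr. unfold m0. destruct (the_unique_spec _ (m0_exists r Hr)) as [Hm Em].
  set (m := the_unique _) in *. repeat split; try lra.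
  destruct (Rlt_dec m (1 / 4)) as [Hlt | Hge]; [exact Hlt|].
  pose proof (hfun_nonpos m ltac:(unfold kr in Hm; lra)). lra.
Qed.

Lemma hfun_one_sixth_pos : 0 < hfun (1 / 6).
Proof.
  unfold hfun. replace ((1 - 2 * (1 / 6)) / (1 / 6)) with 4 by field.
  pose proof ln_4_lt_3_2. lra.
Qed.

Lemma m0_hfun t : 0 < t <= 1 / 6 -> m0 (hfun t) = t.
Proof.
  intro Ht. assert (Hh : 0 < hfun t < 1).
  { split; [|apply hfun_lt_1; lra]. pose proof hfun_one_sixth_pos.
    destruct (Req_dec t (1 / 6)) as [-> | Hne]; [lra|].
    pose proof (hfun_decr t (1 / 6) ltac:(lra) ltac:(lra) ltac:(lra)). lra. }
  destruct (m0_spec _ Hh) as [Hm [_ Em]].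
  destruct (Rtotal_order (m0 (hfun t)) t) as [Hlt | [Heq | Hgt]]; auto; exfalso.
  - pose proof (hfun_decr _ _ (proj1 Hm) Hlt ltac:(lra)). lra.
  - pose proof (hfun_decr _ _ (proj1 Ht) Hgt ltac:(lra)). lra.
Qed.

Lemma fr_at_hfun_root r m : 0 < m < 1 / 3 -> hfun m = r -> fr r m = 2 / (9 * (m * (1 - 2 * m))).
Proof.
  intros Hm Eh. pose proof (ln_ratio_pos m Hm). assert (0 < m * (1 - 2 * m)) by nra.
  unfold fr. fold (ln_ratio m). rewrite <- Eh, hfun_ln_ratio.
  field. split; nra.
Qed.

Lemma fr_derive r x : 0 < x < 1 / 2 -> 1 - r - 3 * x <> 0 ->
  is_derive (fr r) x (2 * (r - hfun x) / (3 * (x * (1 - 2 * x)) * (1 - r - 3 * x) ^ 2)).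
Proof.
  intros Hx Hd. rewrite hfun_ln_ratio. unfold fr, ln_ratio. auto_derive.
  - repeat split; try lra. apply Rdiv_lt_0_compat; lra.
  - change (ln ((1 + - (2 * x)) * / x)) with (ln ((1 - 2 * x) / x)). field. repeat split; lra.
Qed.

Lemma hfun_lt_after_m0 r x : 0 < r < 1 -> m0 r < x < kr r -> hfun x < r.
Proof.
  intros Hr Hx. destruct (m0_spec r Hr) as [Hm [_ Em]].
  destruct (Rle_dec x (1 / 4)) as [Hx4 | Hx4].
  - pose proof (hfun_decr (m0 r) x ltac:(lra) ltac:(lra) Hx4). lra.
  - pose proof (hfun_nonpos x ltac:(unfold kr in Hx; lra)). lra.
Qed.

Lemma fr_nondecr r a b : 0 < r < 1 -> m0 r < a <= b -> b < kr r -> fr r a <= fr r b.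
Proof.
  intros Hr Hab Hb. destruct (m0_spec r Hr) as [Hm _].
  apply (nondecr_of_derive_nonneg _ (fun x =>
    2 * (r - hfun x) / (3 * (x * (1 - 2 * x)) * (1 - r - 3 * x) ^ 2))); [lra| |].
  - intros x Hx. apply fr_derive; unfold kr in *; lra.
  - intros x Hx. pose proof (hfun_lt_after_m0 r x Hr ltac:(lra)).
    apply Rdiv_le_0_compat; [lra|]. apply Rmult_lt_0_compat; [unfold kr in *; nra|].
    apply pow_lt. unfold kr in *. lra.
Qed.

Section SecondPhase.

Variable beta : R.
Hypothesis beta_gt_2 : 2 < beta.

Lemma r2_exists : exists r, 0 < r < 1 /\ fr r (m0 r) = beta.
Proof.
  destruct (IVT_interv (fun t => 9 * beta * (t * (1 - 2 * t)) - 2) 0 (1 / 6)) as [t [Ht Et]];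
    try lra.
  - intros a Ha. apply (is_derive_continuity_pt _ _ (9 * beta * (1 - 4 * a))).
    auto_derive; [easy | ring].
  - assert (Ht' : 0 < t < 1 / 6)
      by (split; [destruct (Req_dec t 0) | destruct (Req_dec t (1 / 6))]; subst; lra).
    exists (hfun t). split.
    + split; [|apply hfun_lt_1; lra]. pose proof hfun_one_sixth_pos.
      pose proof (hfun_decr t (1 / 6) ltac:(lra) ltac:(lra) ltac:(lra)). lra.
    + rewrite m0_hfun, fr_at_hfun_root by lra.
      assert (0 < t * (1 - 2 * t)) by nra.
      replace 2 with (9 * beta * (t * (1 - 2 * t))) at 1 by lra. field. lra.
Qed.

Lemma r2_spec : 0 < r2 beta < 1 /\ 9 * beta * (m0 (r2 beta) * (1 - 2 * m0 (r2 beta))) = 2.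
Proof.
  unfold r2. destruct (the_unique_spec _ r2_exists) as [Hr E].
  set (r := the_unique _) in *. split; [exact Hr|].
  destruct (m0_spec r Hr) as [Hm [Hk Em]].
  rewrite fr_at_hfun_root in E by (unfold kr in Hk; lra).
  assert (0 < m0 r * (1 - 2 * m0 r)) by nra.
  rewrite <- E. field. lra.
Qed.

Lemma below_r2 r : 0 < r < r2 beta -> 2 < 9 * beta * (m0 r * (1 - 2 * m0 r)).
Proof.
  intro Hr. destruct r2_spec as [Hr2 E2].
  destruct (m0_spec r ltac:(lra)) as [Hm [_ Em]].
  destruct (m0_spec (r2 beta) Hr2) as [Hn [_ En]].
  assert (m0 (r2 beta) < m0 r).
  { destruct (Rtotal_order (m0 (r2 beta)) (m0 r)) as [Hlt | [Heq | Hgt]]; auto; exfalso.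
    - rewrite Heq in En. lra.
    - pose proof (hfun_decr _ _ (proj1 Hm) Hgt ltac:(lra)). lra. }
  rewrite <- E2. apply Rmult_lt_compat_l; [lra|]. nra.
Qed.

Lemma ub_spec r : 0 < r < r2 beta -> m0 r < ub beta r < kr r /\ fr r (ub beta r) = beta.
Proof.
  intro Hr. destruct r2_spec as [Hr2 _]. pose proof (below_r2 r Hr) as Hs.
  destruct (m0_spec r ltac:(lra)) as [Hm [Hmk Em]].
  unfold ub. apply the_unique_spec. set (m := m0 r) in *.
  assert (Hk : 0 < kr r < 1 / 3) by (unfold kr; lra).
  assert (Hdm : 0 < dphi beta r m).
  { unfold dphi. pose proof (ln_ratio_pos m ltac:(lra)).
    replace (3 * (1 - r - 3 * m)) with (9 * (m * (1 - 2 * m)) * ln_ratio m)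
      by (rewrite <- Em, hfun_ln_ratio; ring).
    replace (9 * (m * (1 - 2 * m)) * ln_ratio m - 2 / beta * ln_ratio m)
      with (ln_ratio m * (9 * beta * (m * (1 - 2 * m)) - 2) / beta) by (field; lra).
    apply Rdiv_lt_0_compat; [apply Rmult_lt_0_compat|]; lra. }
  pose proof (dphi_neg_beyond_kr beta ltac:(lra) r (kr r) ltac:(lra) ltac:(lra)) as Hdk.
  destruct (IVT_interv (fun t => - dphi beta r t) m (kr r)) as [z [Hz Ez]]; try lra.
  - intros a Ha. apply continuity_pt_opp.
    apply (is_derive_continuity_pt _ _ _ (dphi_derive beta r a ltac:(lra) ltac:(lra))).
  - cbv beta in Ez. assert (z <> m) by (intro E; rewrite E in Ez; lra).
    assert (z <> kr r) by (intro E; rewrite E in Ez; lra).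
    exists z. split; [lra|]. apply fr_eq_iff_dphi_eq0; [lra | unfold kr in *; lra | lra].
Qed.

(* On [(m0 r, kr r)] the map [fr r] is nondecreasing, so [fr r >= beta] after [ub],
   i.e. [dphi <= 0] there. *)
Lemma dphi_nonpos_beyond_ub r x : 0 < r < r2 beta -> ub beta r < x < kr r -> dphi beta r x <= 0.
Proof.
  intros Hr Hx. destruct r2_spec as [Hr2 _]. destruct (ub_spec r Hr) as [Hu Eu].
  pose proof (fr_nondecr r (ub beta r) x ltac:(lra) ltac:(lra) ltac:(lra)).
  assert (0 < 1 - r - 3 * x) by (unfold kr in Hx; lra).
  assert (1 <= fr r x / beta) by (apply Rle_div_r; lra).
  rewrite dphi_fr by lra. nra.
Qed.

(* [phi (qb) <= phi (1/3) < phi (kr) <= phi (ub)], reading off the sign of [dphi]. *)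
Lemma h0_lt_h1_p r : r1 beta < r < r2 beta -> h0 beta r < h1_p beta r.
Proof.
  intro Hr. pose proof (r1_pos beta beta_gt_2). destruct r2_spec as [Hr2 _].
  destruct (ub_spec r ltac:(lra)) as [Hu _]. destruct (m0_spec r ltac:(lra)) as [Hm _].
  assert (Hk : 0 < kr r < 1 / 3) by (unfold kr; lra).
  assert (S1 : phi beta r (kr r) <= phi beta r (ub beta r)).
  { apply (nonincr_of_derive_nonpos _ (dphi beta r)); [lra | |].
    - intros x Hx. apply phi_derive. lra.
    - intros x Hx. apply (dphi_nonpos_beyond_ub r x); lra. }
  assert (S2 : phi beta r (1 / 3) < phi beta r (kr r)).
  { apply (decr_of_derive_neg _ (dphi beta r)); [lra | |].
    - intros x Hx. apply phi_derive. lra.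
    - intros x Hx. apply dphi_neg_beyond_kr; lra. }
  pose proof (phi_qb_le beta ltac:(lra) r (1 / 3) ltac:(lra) ltac:(lra)).
  unfold h0, h1_p, phi in *. lra.
Qed.

End SecondPhase.

Theorem lemma5p10 (beta : R) (hbeta : 2 < beta) :
  (forall r, 0 < r < r1 beta -> h0 beta r < h1_sigma1 beta r) /\
  (forall r, r1 beta < r < r2 beta -> h0 beta r < h1_p beta r).
Proof.
  split.
  - exact (h0_lt_h1_sigma1 beta hbeta).
  - exact (h0_lt_h1_p beta hbeta).
Qed.
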